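(* Let $m\ge 2$, $2\le k\le m$, $N=\binom{m}{k}$ and $\pi\in\mathbb{R}^m_{>0}$. A discrete choice design $\xi^*$ is locally $D$-optimal (for $\pi$) if and only if (i) $\xi^*\in\Delta_N$, (ii) $R^{-1}SL\,\vec{\Gamma}(\xi^* )\le (m-1)\mathbf{1}$ entrywise, and (iii) $\langle R^{-1}SL\,\vec{\Gamma}(\xi^* )-(m-1)\mathbf{1},\,\xi^*\rangle=0$.
   Context: Discrete choice model: alternatives $[m]$ with parameters $\pi_i>0$; choice sets $C_1,\ldots,C_N$ are all $k$-subsets of $[m]$ in lexicographic order, and in choice set $C_j$ alternative $i$ is chosen with probability $\pi_i/\sum_{s\in C_j}\pi_s$. A design is $\xi=(w_1,\ldots,w_N)\in\Delta_N=\{\xi\in\mathbb{R}^N_{\ge0}:\sum_j w_j=1\}$. Its information matrix $M(\xi)$ is the $m\times m$ symmetric matrix with off-diagonal entries $M_{st}(\xi)=-\pi_s\pi_t\sum_{j:\,s,t\in C_j} w_j/(\sum_{i\in C_j}\pi_i)^2$ and diagonal chosen so all row sums vanish. $M^{(m)}(\xi)$ is $M(\xi)$ with the $m$-th row and column deleted. $\xi^*$ is locally $D$-optimal if it maximizes $\log\det M^{(m)}(\xi)$ over $\xi\in\Delta_N$. $\Sigma^{(m)}(\xi)=M^{(m)}(\xi)^{-1}$ and $\Gamma(\xi)$ is its Farris transform: $\Gamma_{uv}=\Sigma_{uu}+\Sigma_{vv}-2\Sigma_{uv}$ for $u,v<m$, $\Gamma_{um}=\Gamma_{mu}=\Sigma_{uu}$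 for $u<m$, $\Gamma_{mm}=0$; $\vec{\Gamma}=(\Gamma_{uv})_{u<v}$ in lexicographic order of pairs. $S$ is the $N\times\binom{m}{2}$ matrix with $S_{j,(u,v)}=1$ if $u,v\in C_j$ and $0$ otherwise; $R=\mathrm{diag}\big((\sum_{i\in C_j}\pi_i)^2\big)_{j=1}^N$; $L=\mathrm{diag}(\pi_u\pi_v)_{u<v}$ in lexicographic order. $\langle\cdot,\cdot\rangle$ is the standard inner product on $\mathbb{R}^N$. *)

From HB Require Import structures.
From mathcomp Require Import all_boot all_order all_algebra.
From mathcomp Require Import all_classical all_reals ereal exp.
Set Implicit Arguments. Unset Strict Implicit. Unset Printing Implicit Defensive.
Import Order.TTheory GRing.Theory Num.Theory.
Local Open Scope ring_scope.

Section DiscreteChoice.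
Variable R : realType.
Variables m k : nat.

(* The choice sets: all k-subsets of [m] = 'I_m.  A design is indexed by the
   choice sets themselves (equivalent to indexing by their lexicographic rank). *)
Definition choice_set := {C : {set 'I_m} | #|C| == k}.

Definition upair := {p : 'I_m * 'I_m | (p.1 < p.2)%N}.

Variable pi : 'I_m -> R.

Definition set_weight (C : choice_set) : R := \sum_(i in val C) pi i.

Definition in_simplex (w : choice_set -> R) : Prop :=
  (forall C, 0 <= w C) /\ \sum_C w C = 1.

Definition info_off (w : choice_set -> R) (s t : 'I_m) : R :=
  - (pi s * pi t) *
    \sum_(C : choice_set | (s \in val C) && (t \in val C)) w C / (set_weight C) ^+ 2.

Definition info_mx (w : choice_set -> R) : 'M[R]_m :=
  \matrix_(s, t) (if s == t then - \sum_(t' | t' != s) info_off w s t'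
                  else info_off w s t).

Definition info_red (w : choice_set -> R) : 'M[R]_(m.-1) :=
  \matrix_(i, j) info_mx w (widen_ord (leq_pred m) i) (widen_ord (leq_pred m) j).

Definition logdet_red (w : choice_set -> R) : \bar R :=
  if 0 < \det (info_red w) then (ln (\det (info_red w)))%:E else -oo%E.

Definition locally_D_optimal (w : choice_set -> R) : Prop :=
  in_simplex w /\
  forall w', in_simplex w' -> (logdet_red w' <= logdet_red w)%E.

Definition Sigma_red (w : choice_set -> R) : 'M[R]_(m.-1) := invmx (info_red w).

Definition red_idx (u : 'I_m) : option 'I_(m.-1) := insub (val u).

Definition Gamma (w : choice_set -> R) (u v : 'I_m) : R :=
  let S := Sigma_red w in
  match red_idx u, red_idx v with
  | Some a, Some b => S a a + S b b - 2 * S a b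
  | Some a, None => S a a
  | None, Some b => S b b
  | None, None => 0
  end.

Definition Gamma_vec (w : choice_set -> R) (p : upair) : R :=
  Gamma w (val p).1 (val p).2.

Definition S_mx (C : choice_set) (p : upair) : R :=
  if ((val p).1 \in val C) && ((val p).2 \in val C) then 1 else 0.
Definition R_diag (C : choice_set) : R := (set_weight C) ^+ 2.
Definition L_diag (p : upair) : R := pi (val p).1 * pi (val p).2.

Definition RSLGamma (w : choice_set -> R) (C : choice_set) : R :=
  (R_diag C)^-1 * \sum_(p : upair) S_mx C p * (L_diag p * Gamma_vec w p).

End DiscreteChoice.

From HB Require Import structures.
From mathcomp Require Import all_boot all_order all_algebra.
From mathcomp Require Import all_classical all_reals ereal exp.
From mathcomp Require Import ring lra zify.
Set Implicit Arguments. Unset Strict Implicit. Unset Printing Implicit Defensive.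
Import Order.TTheory GRing.Theory Num.Theory.
Local Open Scope ring_scope.

(* The information matrix is linear in the design and is a weighted Laplacian, so
   M^(m)(w) is positive semidefinite for nonnegative weights, and definite as soon as
   every alternative shares a weighted choice set with the last one.  Pairing the
   Laplacian of the one-point design at C with Sigma = M^(m)(xi)^-1 produces the
   Farris transform: tr (Sigma M^(m)(delta_C)) is the C-th entry of R^-1 S L vec Gamma,
   hence tr (Sigma M^(m)(w)) = sum_C w_C (R^-1 S L vec Gamma)_C.  If these entries are
   at most m - 1, then tr (M^(m)(xi)^-1 M^(m)(w)) <= m - 1 on the simplex, and a
   congruence diagonalisation of M^(m)(xi), Hadamard's inequality and AM-GM give
   det M^(m)(w) <= det M^(m)(xi).  Conversely, if the C-th entry exceeds m - 1, moving
   from xi slightly towards delta_C multiplies the determinant by det (1 + t Z) > 1,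
   where tr Z is that excess.  Complementary slackness is tr (Sigma M^(m)(xi)) = m - 1. *)

Section PositiveDefinite.
Variable F : realFieldType.

Definition qform n (A : 'M[F]_n) (x : 'rV[F]_n) : F := (x *m A *m x^T) 0 0.
Definition psdmx n (A : 'M[F]_n) := A^T = A /\ forall x, 0 <= qform A x.
Definition pdmx n (A : 'M[F]_n) := A^T = A /\ forall x, x != 0 -> 0 < qform A x.

Lemma qformDZ n (A : 'M[F]_n) x y t : A^T = A ->
  qform A (x + t *: y) = qform A x + 2 * t * (x *m A *m y^T) 0 0 + t ^+ 2 * qform A y.
Proof.
move=> sA; rewrite /qform linearD /= linearZ /= !mulmxDl !mulmxDr -!scalemxAl -!scalemxAr.
have -> : y *m A *m x^T = x *m A *m y^T.
  rewrite [LHS]mx11_scalar [RHS]mx11_scalar; congr _%:M.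
  by rewrite -[y *m A *m x^T]trmxK [LHS]mxE !trmx_mul !trmxK sA mulmxA.
by rewrite scalerA !mxE; ring.
Qed.

Lemma eq0_of_quadratic_ge0 (b c : F) :
  0 <= c -> (forall t, 0 <= t * b + t ^+ 2 * c) -> b = 0.
Proof.
move=> c_ge0 hq; set u := b / (c + 1).
have hb : b = u * (c + 1) by rewrite /u divfK // gt_eqF // ltr_wpDl.
have := hq (- u); rewrite hb (_ : _ + _ = - u ^+ 2); last by ring.
rewrite oppr_ge0 => u2_le0; suff -> : u = 0 by rewrite mul0r.
by apply/eqP; rewrite -sqrf_eq0 eq_le u2_le0 sqr_ge0.
Qed.

Lemma psdmx_qform_eq0 n (A : 'M[F]_n) x : psdmx A -> qform A x = 0 -> x *m A = 0.
Proof.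
move=> [sA A_ge0] qx0; set y := x *m A.
have : 2 * (x *m A *m y^T) 0 0 = 0.
  apply: (eq0_of_quadratic_ge0 (A_ge0 y)) => t.
  by have := A_ge0 (x + t *: y); rewrite qformDZ // qx0 add0r (mulrC 2) -mulrA.
move/eqP; rewrite mulf_eq0 pnatr_eq0 /= mxE => /eqP sum0.
have y0 j : y 0 j * y^T j 0 = 0.
  by apply: (psumr_eq0P _ sum0) => // i _; rewrite [y^T i 0]mxE -expr2 sqr_ge0.
apply/rowP => j; have /eqP := y0 j.
by rewrite [y^T j 0]mxE -expr2 sqrf_eq0 [RHS]mxE => /eqP.
Qed.

Lemma psdmx_unit_pd n (A : 'M[F]_n) : psdmx A -> A \in unitmx -> pdmx A.
Proof.
move=> psdA uA; split; first by case: psdA.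
move=> x x0; rewrite lt_def (proj2 psdA) andbT; apply: contraNneq x0 => qx0.
by rewrite -(mulmxK uA x) (psdmx_qform_eq0 psdA qx0) mul0mx.
Qed.

Lemma pdmx_congr n (P A : 'M[F]_n) : P \in unitmx -> pdmx A -> pdmx (P *m A *m P^T).
Proof.
move=> uP [sA A_gt0]; split; first by rewrite !trmx_mul trmxK sA mulmxA.
move=> x x0; have xP0 : x *m P != 0.
  by apply: contraNneq x0 => xP0; rewrite -(mulmxK uP x) xP0 mul0mx.
by have := A_gt0 _ xP0; rewrite /qform trmx_mul !mulmxA.
Qed.

Lemma pdmx_diag_gt0 n (A : 'M[F]_n) i : pdmx A -> 0 < A i i.
Proof.
case=> _ A_gt0; have e0 : delta_mx 0 i != 0 :> 'rV[F]_n.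
  by apply/eqP => /rowP /(_ i); rewrite !mxE !eqxx => /eqP; rewrite oner_eq0.
by have := A_gt0 _ e0; rewrite /qform -rowE trmx_delta -colE !mxE.
Qed.

Lemma pdmx_drsub n1 n2 (A : 'M[F]_(n1 + n2)) : pdmx A -> pdmx (drsubmx A).
Proof.
case=> sA A_gt0; split.
  by rewrite -[in RHS]sA -[in RHS](submxK A) tr_block_mx block_mxKdr.
move=> x x0; have x0' : row_mx (0 : 'rV[F]_n1) x != 0 by rewrite row_mx_eq0 negb_and x0 orbT.
have := A_gt0 _ x0'; rewrite /qform -{1}[A]submxK mul_row_block !mul0mx !add0r.
by rewrite tr_row_mx mul_row_col trmx0 mulmx0 add0r.
Qed.

Lemma schur_congr n (a : F) (u : 'cV[F]_n) (B : 'M[F]_n) : a != 0 ->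
  let E : 'M_(1 + n) := block_mx 1 0 (- a^-1 *: u) 1 in
  E *m block_mx a%:M u^T u B *m E^T = block_mx a%:M 0 0 (B - a^-1 *: (u *m u^T)).
Proof.
move=> a0 E; rewrite /E tr_block_mx !trmx1 !trmx0 !mulmx_block.
rewrite !mul1mx !mul0mx !mulmx1 !mulmx0 ?addr0 ?add0r.
have ua : - a^-1 *: u *m a%:M = - u.
  by rewrite mul_mx_scalar scalerA mulrN divff // scaleN1r.
rewrite ua addNr mul0mx add0r; congr block_mx.
  by rewrite linearZ /= mul_scalar_mx scalerA mulrN divff // scaleN1r addNr.
by rewrite -scalemxAl scaleNr addrC.
Qed.

Lemma pdmx_ldl n (A : 'M[F]_n) : pdmx A ->
  exists E : 'M[F]_n, exists2 d : 'rV[F]_n,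
    \det E = 1 /\ E *m A *m E^T = diag_mx d & forall i, 0 < d 0 i <= A i i.
Proof.
elim: n A => [|n IHn] A pdA.
  by exists 1, 0; [rewrite det1 !flatmx0 | case].
move: A pdA; change n.+1 with (1 + n)%N => A pdA; have sA := proj1 pdA.
set a := A 0 0; set u := dlsubmx A; set B := drsubmx A.
have a_gt0 : 0 < a := pdmx_diag_gt0 0 pdA.
have defA : A = block_mx a%:M u^T u B.
  rewrite -{1}[A]submxK [ulsubmx A]mx11_scalar !mxE lshift0; congr block_mx.
  by rewrite -sA -[A in A^T]submxK tr_block_mx block_mxKur.
set S := B - a^-1 *: (u *m u^T).
set E1 : 'M_(1 + n) := block_mx 1 0 (- a^-1 *: u) 1.
have hE1 : E1 *m A *m E1^T = block_mx a%:M 0 0 S by rewrite defA schur_congr ?gt_eqF.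
have dE1 : \det E1 = 1 by rewrite det_lblock !det1 mulr1.
have pdS : pdmx S.
  have uE1 : E1 \in unitmx by rewrite unitmxE dE1 unitr1.
  have -> : S = drsubmx (block_mx (a%:M : 'M_1) 0 0 S) by rewrite block_mxKdr.
  by rewrite -hE1; exact/pdmx_drsub/pdmx_congr.
have [E' [d' [dE' hE'] d'_bnd]] := IHn _ pdS.
exists (block_mx 1 0 0 E' *m E1), (row_mx a%:M d'); first split.
- by rewrite det_mulmx dE1 det_ublock det1 dE' !mulr1.
- set P := block_mx 1 0 0 E'.
  have -> : P *m E1 *m A *m (P *m E1)^T = P *m (E1 *m A *m E1^T) *m P^T.
    by rewrite trmx_mul !mulmxA.
  rewrite hE1 tr_block_mx !trmx0 trmx1 !mulmx_block.
  rewrite !mul1mx !mul0mx !mulmx1 !mulmx0 ?addr0 ?add0r hE' diag_mx_row mul0mx.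
  by congr block_mx; apply/matrixP => i j; rewrite !ord1 !mxE eqxx mulr1n.
move=> i; case: (split_ordP i) => j ->.
  by rewrite row_mxEl !ord1 mxE eqxx mulr1n a_gt0 lshift0 lexx.
rewrite row_mxEr; have /andP[-> /le_trans->] // := d'_bnd j.
rewrite /S !mxE big_ord1 !mxE lerBlDr lerDl.
by rewrite mulr_ge0 ?invr_ge0 ?(ltW a_gt0) // -expr2 sqr_ge0.
Qed.

Lemma det_congr_diag n (E A : 'M[F]_n) d :
  \det E = 1 -> E *m A *m E^T = diag_mx d -> \det A = \prod_i d 0 i.
Proof. by move=> dE hE; rewrite -det_diag -hE !det_mulmx det_tr dE mul1r mulr1. Qed.

Lemma pdmx_det_gt0 n (A : 'M[F]_n) : pdmx A -> 0 < \det A.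
Proof.
move=> /pdmx_ldl[E [d [dE hE] d_bnd]]; rewrite (det_congr_diag dE hE).
by apply: prodr_gt0 => i _; case/andP: (d_bnd i).
Qed.

Lemma pdmx_det_le_prod_diag n (A : 'M[F]_n) : pdmx A -> \det A <= \prod_i A i i.
Proof.
move=> /pdmx_ldl[E [d [dE hE] d_bnd]]; rewrite (det_congr_diag dE hE).
by apply: ler_prod => i _; case/andP: (d_bnd i) => /ltW -> ->.
Qed.

Lemma prod_le1_AGM n (e : 'I_n -> F) :
  (forall i, 0 <= e i) -> \sum_i e i <= n%:R -> \prod_i e i <= 1.
Proof.
case: n e => [|n] e e_ge0 sum_le; first by rewrite big_ord0.
have /leif_AGM/le_trans-> // : {in 'I_n.+1, forall i, 0 <= e i}.
  by move=> i _; exact: e_ge0.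
rewrite card_ord; apply: exprn_ile1; first by rewrite divr_ge0 ?sumr_ge0.
by rewrite ler_pdivrMr ?ltr0n // mul1r.
Qed.

Lemma mulmx1_invmx n (A B : 'M[F]_n) : A *m B = 1%:M -> invmx A = B.
Proof.
move=> AB1; have [uA _] := mulmx1_unit AB1.
by rewrite -[RHS](mulKmx uA) AB1 mulmx1.
Qed.

Lemma pdmx_det_le n (A B : 'M[F]_n) : pdmx A -> pdmx B ->
  \tr (invmx A *m B) <= n%:R -> \det B <= \det A.
Proof.
move=> pdA pdB tr_le; have [E [d [dE hE] d_bnd]] := pdmx_ldl pdA.
have d_gt0 i : 0 < d 0 i by case/andP: (d_bnd i).
have uE : E \in unitmx by rewrite unitmxE dE unitr1.
set Y := E *m B *m E^T; have pdY : pdmx Y := pdmx_congr uE pdB.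
set Dinv := diag_mx (\row_i (d 0 i)^-1).
have invA : invmx A = E^T *m Dinv *m E.
  have dDinv : diag_mx d *m Dinv = 1%:M.
    rewrite mulmx_diag -diag_const_mx; congr diag_mx; apply/rowP => i.
    by rewrite !mxE divff ?gt_eqF.
  have /mulmx1_invmx invE : E *m (A *m E^T *m Dinv) = 1%:M by rewrite !mulmxA hE.
  by apply: mulmx1_invmx; rewrite !mulmxA -invE mulVmx.
have trY : \sum_i Y i i / d 0 i <= n%:R.
  move: tr_le; rewrite invA -!mulmxA mxtrace_mulC.
  rewrite (_ : _ *m E^T = Dinv *m Y); last by rewrite /Y !mulmxA.
  by rewrite mul_diag_mx /mxtrace; under eq_bigr do rewrite mxE [X in X * _]mxE mulrC.
have detY : \det Y = \det B by rewrite !det_mulmx det_tr dE mul1r mulr1.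
(* Hadamard's inequality for [Y], then AM-GM for the ratios [Y i i / d 0 i]. *)
rewrite (det_congr_diag dE hE) -detY.
apply: (le_trans (pdmx_det_le_prod_diag pdY)).
have -> : \prod_i Y i i = \prod_i (Y i i / d 0 i) * \prod_i d 0 i.
  by rewrite -big_split; apply: eq_bigr => i _ /=; rewrite divfK ?gt_eqF.
rewrite ler_piMl //; first by apply: prodr_ge0 => i _; exact: ltW.
apply: prod_le1_AGM => // i; rewrite divr_ge0 ?(ltW (d_gt0 i)) //.
exact: ltW (pdmx_diag_gt0 i pdY).
Qed.

Lemma horner_char_poly n (A : 'M[F]_n) s : (char_poly A).[s] = \det (s%:M - A).
Proof.
rewrite /char_poly -horner_evalE -det_map_mx; congr determinant.
apply/matrixP => i j; rewrite !mxE /= ?horner_evalE.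
by case: (i == j); rewrite /= ?mulr1n ?mulr0n !hornerE.
Qed.

Lemma det_perturb_ge n (Z : 'M[F]_n.+1) : exists2 K, 0 <= K &
  forall t, 0 < t <= 1 -> 1 + t * \tr Z - t ^+ 2 * K <= \det (1%:M + t *: Z).
Proof.
set p := char_poly (- Z); exists (\sum_(i < n) `|p`_i|).
  by rewrite sumr_ge0 // => i _; rewrite normr_ge0.
move=> t /andP[t_gt0 t_le1]; have t0 : t != 0 by rewrite gt_eqF.
have -> : 1%:M + t *: Z = t *: (t^-1%:M - - Z).
  by rewrite opprK scalerDr scale_scalar_mx divff.
(* [det (1 + t Z) = t^(n+1) p(1/t) = 1 + t tr Z + sum_(i < n) p_i t^(n+1-i)]. *)
rewrite detZ -horner_char_poly horner_coef size_char_poly !big_ord_recr /=.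
have -> : p`_n.+1 = 1.
  by have /monicP := char_poly_monic (- Z); rewrite /lead_coef size_char_poly.
have -> : p`_n = \tr Z by rewrite char_poly_trace // linearN opprK.
rewrite mul1r !mulrDr.
have -> : t ^+ n.+1 * t^-1 ^+ n.+1 = 1 by rewrite -exprMn divff // expr1n.
have -> : t ^+ n.+1 * (\tr Z * t^-1 ^+ n) = t * \tr Z.
  by rewrite exprS mulrCA -mulrA -exprMn divff // expr1n mulr1 mulrC.
suff : - (t ^+ 2 * \sum_(i < n) `|p`_i|) <= t ^+ n.+1 * \sum_(i < n) p`_i * t^-1 ^+ i.
  by lra.
rewrite !mulr_sumr -sumrN; apply: ler_sum => i _.
have t2_ge0 : 0 <= t ^+ 2 by rewrite exprn_ge0 // ltW.
rewrite mulrCA.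
have -> : t ^+ n.+1 * t^-1 ^+ i = t ^+ 2 * t ^+ (n.+1 - i.+2).
  rewrite -exprD exprVn -expfB; last by rewrite ltnS ltnW.
  by congr (t ^+ _); have := ltn_ord i; lia.
rewrite mulrCA -mulrN ler_wpM2l //.
have tk0 : 0 <= t ^+ (n.+1 - i.+2) := exprn_ge0 _ (ltW t_gt0).
have tk1 : t ^+ (n.+1 - i.+2) <= 1 := exprn_ile1 _ (ltW t_gt0) t_le1.
have := ler_norm (p`_i); have := ler_norm (- p`_i); rewrite normrN; nra.
Qed.

Lemma det_perturb_gt1 n (Z : 'M[F]_n) : 0 < \tr Z ->
  exists t, 0 < t <= 1 /\ 1 < \det (1%:M + t *: Z).
Proof.
case: n Z => [|n] Z trZ; first by move: trZ; rewrite /mxtrace big_ord0 ltxx.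
have [K K_ge0 detK] := det_perturb_ge Z; set T := \tr Z in trZ detK.
have TK_gt0 : 0 < T + K + 1 by lra.
set t := T / (T + K + 1); have tTK : t * (T + K + 1) = T by rewrite divfK ?gt_eqF.
have t_gt0 : 0 < t by rewrite divr_gt0.
have t_le1 : t <= 1 by rewrite ler_pdivrMr // mul1r; lra.
exists t; rewrite t_gt0 t_le1; split=> //; apply: lt_le_trans (detK t _); last exact/andP.
have : 0 < t ^+ 2 * (T + 1) by rewrite mulr_gt0 ?exprn_gt0 //; lra.
nra.
Qed.

End PositiveDefinite.

Section Laplacian.
Variables (R : comPzRingType) (I : finType).
Implicit Types off S : I -> I -> R.

Definition laplacian off (s t : I) : R :=
  if s == t then - \sum_(t' | t' != s) off s t' else off s t.

Lemma laplacian_sum (J : finType) (c : J -> R) (offs : J -> I -> I -> R) off :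
  (forall s t, off s t = \sum_j c j * offs j s t) ->
  forall s t, laplacian off s t = \sum_j c j * laplacian (offs j) s t.
Proof.
move=> off_sum s t; rewrite /laplacian; case: eqP => _ //.
under [RHS]eq_bigr do rewrite mulrN mulr_sumr; rewrite sumrN exchange_big.
by congr -%R; apply: eq_bigr => t' _; exact: off_sum.
Qed.

Lemma sum_neq_swap (f : I -> I -> R) :
  \sum_s \sum_(t | t != s) f s t = \sum_s \sum_(t | t != s) f t s.
Proof.
rewrite (exchange_big_dep xpredT) //=; apply: eq_bigr => s _.
by apply: eq_bigl => t; rewrite eq_sym.
Qed.

Lemma laplacian_pairing off S :
  (forall s t, off s t = off t s) -> (forall s t, S s t = S t s) ->
  2 * \sum_s \sum_t S s t * laplacian off t s =
  \sum_s \sum_(t | t != s) - off s t * (S s s + S t t - 2 * S s t).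
Proof.
move=> off_sym S_sym.
have row_s s : \sum_t S s t * laplacian off t s =
    \sum_(t | t != s) off s t * (S s t - S s s).
  rewrite (bigD1 s) //= /laplacian eqxx mulrN mulr_sumr -sumrN -big_split /=.
  by apply: eq_bigr => t ts; rewrite (negbTE ts) off_sym; ring.
(* [- off (S s s + S t t - 2 S s t) = 2 off (S s t - S s s) + off (S s s - S t t)],
   and the last part sums to zero. *)
have swap : \sum_s \sum_(t | t != s) off s t * S t t =
            \sum_s \sum_(t | t != s) off s t * S s s.
  by rewrite sum_neq_swap; apply: eq_bigr => s _; apply: eq_bigr => t _; rewrite off_sym.
transitivity (\sum_s \sum_(t | t != s) 2 * (off s t * (S s t - S s s)) +
   (\sum_s \sum_(t | t != s) off s t * S s s - \sum_s \sum_(t | t != s) off s t * S t t)).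
  by rewrite swap subrr addr0 mulr_sumr; apply: eq_bigr => s _; rewrite row_s mulr_sumr.
rewrite -sumrB -big_split /=; apply: eq_bigr => s _.
by rewrite -sumrB -big_split /=; apply: eq_bigr => t _; ring.
Qed.

End Laplacian.

Lemma sum_upair_sym (R : comPzRingType) m (f : 'I_m -> 'I_m -> R) :
  (forall s t, f s t = f t s) ->
  2 * \sum_(p : upair m) f (val p).1 (val p).2 = \sum_s \sum_(t | t != s) f s t.
Proof.
move=> f_sym.
have -> : \sum_(p : upair m) f (val p).1 (val p).2 =
          \sum_(s : 'I_m) \sum_(t : 'I_m | (s < t)%N) f s t.
  rewrite pair_big_dep (reindex_omap (val : upair m -> _) insub) /=; last first.
    by move=> p p_lt; rewrite insubT.
  by apply: eq_bigl => -[p p_lt] /=; rewrite insubT /= p_lt eqxx.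
have split_neq s : \sum_(t | t != s) f s t =
    \sum_(t : 'I_m | (s < t)%N) f s t + \sum_(t : 'I_m | (t < s)%N) f t s.
  rewrite (bigID (fun t : 'I_m => (s < t)%N)) /=; congr (_ + _).
    by apply: eq_bigl => t; rewrite -val_eqE /= andbC; case: ltngtP.
  apply: eq_big => [t | t _]; last exact: f_sym.
  by rewrite -val_eqE /= -leqNgt; case: ltngtP.
under [RHS]eq_bigr do rewrite split_neq.
rewrite big_split /= mulr2n mulrDl mul1r; congr (_ + _).
by rewrite (exchange_big_dep xpredT).
Qed.

Section InformationMatrix.
Variables (R : realType) (m k : nat) (pi : 'I_m -> R).
Local Notation design := (choice_set m k -> R).

Definition point_design (C : choice_set m k) : design := fun C' => (C' == C)%:R.

Lemma info_off_point C s t : info_off pi (point_design C) s t =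
  - (pi s * pi t) * ((s \in val C) && (t \in val C))%:R / set_weight pi C ^+ 2.
Proof.
rewrite /info_off -mulrA; congr (_ * _).
case: (boolP ((s \in val C) && (t \in val C))) => stC /=.
  rewrite (bigD1 C) //= /point_design eqxx mul1r big1 ?addr0 // => C' /andP[_ /negbTE->].
  by rewrite mul0r.
by rewrite mul0r big1 // => C' stC'; rewrite /point_design; case: eqP stC' => [->|_ _];
  rewrite ?(negbTE stC) ?mul0r.
Qed.

Lemma info_off_linear (w : design) s t :
  info_off pi w s t = \sum_C w C * info_off pi (point_design C) s t.
Proof.
under [RHS]eq_bigr do rewrite info_off_point.
rewrite /info_off big_mkcond mulr_sumr; apply: eq_bigr => C _.
by case: ifP => _; rewrite /= ?mulr1n ?mulr0n ?mulr0 ?mul0r //; ring.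
Qed.

Lemma info_off_sym (w : design) s t : info_off pi w s t = info_off pi w t s.
Proof.
by rewrite /info_off [pi s * _]mulrC; congr (_ * _); apply: eq_bigl => C; rewrite andbC.
Qed.

Lemma info_red_linear (w : design) :
  info_red pi w = \sum_C w C *: info_red pi (point_design C).
Proof.
apply/matrixP => i j; rewrite summxE !mxE; under [RHS]eq_bigr do rewrite !mxE.
exact: laplacian_sum (info_off_linear w) _ _.
Qed.

Lemma info_red_sym (w : design) : (info_red pi w)^T = info_red pi w.
Proof.
apply/matrixP => i j; rewrite !mxE; case: (eqVneq i j) => [-> //|ij].
have ji : widen_ord (leq_pred m) j != widen_ord (leq_pred m) i.
  by apply: contraNneq ij => /(congr1 val) /= /val_inj ->.
by rewrite (negbTE ji) eq_sym (negbTE ji) info_off_sym.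
Qed.

Lemma info_red_comb (a b : R) (w1 w2 : design) :
  info_red pi (fun C => a * w1 C + b * w2 C) = a *: info_red pi w1 + b *: info_red pi w2.
Proof.
rewrite !info_red_linear !scaler_sumr -big_split /=; apply: eq_bigr => C _.
by rewrite scalerDl !scalerA.
Qed.

Lemma logdet_red_le (w w' : design) : 0 < \det (info_red pi w) ->
  (logdet_red pi w' <= logdet_red pi w)%E = (\det (info_red pi w') <= \det (info_red pi w)).
Proof.
move=> det_gt0; rewrite /logdet_red det_gt0; case: ifP => [det'_gt0 | /negbT].
  by rewrite lee_fin ler_ln ?posrE.
by rewrite leNye -leNgt => /le_trans->; rewrite // ltW.
Qed.

End InformationMatrix.

Arguments point_design {R m k}.

Lemma exists_choice_set m k (a b : 'I_m) : a != b -> (2 <= k <= m)%N ->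
  exists C : choice_set m k, a \in val C /\ b \in val C.
Proof.
move=> ab /andP[k_ge2 k_le_m].
have card_ab : #|~: [set a; b]| = (m - 2)%N.
  by have := cardsC [set a; b]; rewrite cards2 ab card_ord; lia.
have : (0 < 'C(#|~: [set a; b]|, k - 2))%N by rewrite bin_gt0 card_ab leq_sub2r.
rewrite -cards_draws => /card_gt0P[X]; rewrite inE => /andP[/fintype.subsetP X_ab /eqP card_X].
have abX x : x \in X -> (x != a) && (x != b).
  by move=> /X_ab; rewrite !inE negb_or.
have card_C : #|a |: (b |: X)| == k.
  rewrite !cardsU1 !inE negb_or ab card_X.
  have /negPf-> : a \notin X by apply/negP => /abX; rewrite eqxx.
  have /negPf-> : b \notin X by apply/negP => /abX; rewrite eqxx andbF.
  by apply/eqP => /=; lia.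
by exists (exist (fun C : {set 'I_m} => #|C| == k) _ card_C); rewrite /= !inE !eqxx orbT.
Qed.

Section ReducedInformation.
Variables (R : realType) (n k : nat) (pi : 'I_n.+1 -> R).
Local Notation design := (choice_set n.+1 k -> R).

Definition pad (S : 'M[R]_n) (s t : 'I_n.+1) : R :=
  if (red_idx s, red_idx t) is (Some a, Some b) then S a b else 0.

Definition pad_row (x : 'rV[R]_n) (s : 'I_n.+1) : R :=
  if red_idx s is Some a then x 0 a else 0.

Lemma red_idx_widen (h : (n <= n.+1)%N) i : red_idx (widen_ord h i) = Some i.
Proof. by rewrite /red_idx /= valK. Qed.

Lemma red_idx_max : red_idx (ord_max : 'I_n.+1) = None.
Proof. by rewrite /red_idx insubF //= ltnn. Qed.

Lemma sum_pad (S : 'M[R]_n) (F : 'I_n.+1 -> 'I_n.+1 -> R) :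
  \sum_s \sum_t pad S s t * F t s =
  \sum_i \sum_j S i j * F (widen_ord (leq_pred n.+1) j) (widen_ord (leq_pred n.+1) i).
Proof.
rewrite big_ord_recr /= [X in _ + X]big1 ?addr0 => [|t _]; last first.
  by rewrite /pad red_idx_max mul0r.
apply: eq_bigr => i _; rewrite big_ord_recr /= /pad red_idx_max.
rewrite red_idx_widen mul0r addr0; apply: eq_bigr => j _.
by rewrite red_idx_widen; congr (_ * F _ _); apply: val_inj.
Qed.

Lemma tr_mul_info_red (S : 'M[R]_n) (w : design) :
  \tr (S *m info_red pi w) = \sum_s \sum_t pad S s t * laplacian (info_off pi w) t s.
Proof.
rewrite sum_pad; apply: eq_bigr => i _; rewrite mxE.
by apply: eq_bigr => j _; rewrite !mxE.
Qed.

Lemma pad_sym (S : 'M[R]_n) : S^T = S -> forall s t, pad S s t = pad S t s.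
Proof.
by move=> sS s t; rewrite /pad; case: red_idx => [a|]; case: red_idx => [b|] //;
  rewrite -[in LHS]sS mxE.
Qed.

Lemma Gamma_pad (w : design) u v : Gamma pi w u v =
  pad (Sigma_red pi w) u u + pad (Sigma_red pi w) v v - 2 * pad (Sigma_red pi w) u v.
Proof. by rewrite /Gamma /pad; case: red_idx => [a|]; case: red_idx => [b|]; ring. Qed.

Lemma RSLGamma_point (xi : design) C :
  RSLGamma pi xi C = \tr (Sigma_red pi xi *m info_red pi (point_design C)).
Proof.
set Sg := pad (Sigma_red pi xi).
have Sg_sym : forall s t, Sg s t = Sg t s.
  by apply: pad_sym; rewrite /Sigma_red trmx_inv (info_red_sym pi xi).
pose f s t := - info_off pi (point_design C) s t * Gamma pi xi s t.
have f_sym s t : f s t = f t s.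
  by rewrite /f info_off_sym !Gamma_pad -/Sg (Sg_sym s t); ring.
apply: (@mulfI _ 2); first by rewrite pnatr_eq0.
transitivity (2 * \sum_(p : upair n.+1) f (val p).1 (val p).2).
  congr (_ * _); rewrite /RSLGamma mulr_sumr; apply: eq_bigr => p _.
  rewrite /f /S_mx /L_diag /Gamma_vec /R_diag info_off_point.
  by case: ifP => _ /=; ring.
rewrite sum_upair_sym // tr_mul_info_red laplacian_pairing //; last exact: info_off_sym.
by apply: eq_bigr => s _; apply: eq_bigr => t _; rewrite /f Gamma_pad.
Qed.

Lemma tr_Sigma_info_red (xi w : design) :
  \tr (Sigma_red pi xi *m info_red pi w) = \sum_C w C * RSLGamma pi xi C.
Proof.
rewrite [info_red _ w]info_red_linear mulmx_sumr raddf_sum /=.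
by apply: eq_bigr => C _; rewrite -scalemxAr mxtraceZ RSLGamma_point.
Qed.

Lemma pad_gram (x : 'rV[R]_n) s t : pad (x^T *m x) s t = pad_row x s * pad_row x t.
Proof.
rewrite /pad /pad_row; case: red_idx => [a|]; case: red_idx => [b|];
  by rewrite ?mulr0 ?mul0r // mxE big_ord1 mxE.
Qed.

Lemma info_red_qform (w : design) x : 2 * qform (info_red pi w) x =
  \sum_s \sum_(t | t != s) - info_off pi w s t * (pad_row x s - pad_row x t) ^+ 2.
Proof.
have -> : qform (info_red pi w) x = \tr (x^T *m x *m info_red pi w).
  by rewrite -mulmxA mxtrace_mulC /mxtrace big_ord1.
rewrite tr_mul_info_red laplacian_pairing; first last.
- by apply: pad_sym; rewrite trmx_mul trmxK.
- exact: info_off_sym.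
by apply: eq_bigr => s _; apply: eq_bigr => t _; rewrite !pad_gram; congr (_ * _); ring.
Qed.

Hypothesis pi_gt0 : forall i, 0 < pi i.

Lemma set_weight_gt0 (C : choice_set n.+1 k) i : i \in val C -> 0 < set_weight pi C.
Proof.
move=> iC; rewrite /set_weight (bigD1 i) //= ltr_wpDr ?pi_gt0 //.
by rewrite sumr_ge0 // => j _; exact: ltW.
Qed.

Lemma info_off_le0 (w : design) s t : (forall C, 0 <= w C) -> info_off pi w s t <= 0.
Proof.
move=> w_ge0; rewrite /info_off mulNr oppr_le0 mulr_ge0 ?mulr_ge0 ?(ltW (pi_gt0 _)) //.
by rewrite sumr_ge0 // => C _; rewrite divr_ge0 ?sqr_ge0.
Qed.

Lemma info_off_lt0 (w : design) C s t : (forall C, 0 <= w C) -> 0 < w C ->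
  s \in val C -> t \in val C -> info_off pi w s t < 0.
Proof.
move=> w_ge0 wC_gt0 sC tC; rewrite /info_off mulNr oppr_lt0 mulr_gt0 ?mulr_gt0 //.
rewrite (bigD1 C) ?sC ?tC //= ltr_wpDr ?divr_gt0 ?exprn_gt0 ?(set_weight_gt0 sC) //.
by rewrite sumr_ge0 // => C' _; rewrite divr_ge0 ?sqr_ge0.
Qed.

Lemma info_red_psd (w : design) : (forall C, 0 <= w C) -> psdmx (info_red pi w).
Proof.
move=> w_ge0; split=> [|x]; first exact: info_red_sym.
rewrite -(pmulr_rge0 _ (ltr0Sn _ 1)) info_red_qform.
do 2!(apply: sumr_ge0 => ? _); rewrite mulr_ge0 ?sqr_ge0 // oppr_ge0.
exact: info_off_le0.
Qed.

Lemma info_red_pd (w : design) : (forall C, 0 <= w C) ->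
  (forall i : 'I_n, info_off pi w (widen_ord (leq_pred n.+1) i) ord_max < 0) ->
  pdmx (info_red pi w).
Proof.
move=> w_ge0 linked; split=> [|x x0]; first exact: info_red_sym.
have [j xj0] : exists j, x 0 j != 0.
  apply/existsP; apply: contraNT x0 => /existsPn x0.
  by apply/eqP/rowP => j; rewrite mxE; apply/eqP/negPn.
set s0 := widen_ord (leq_pred n.+1) j.
have s0_max : (ord_max : 'I_n.+1) != s0 by rewrite -val_eqE /= neq_ltn ltn_ord orbT.
have term_ge0 s t : 0 <= - info_off pi w s t * (pad_row x s - pad_row x t) ^+ 2.
  by rewrite mulr_ge0 ?sqr_ge0 // oppr_ge0 info_off_le0.
rewrite -(pmulr_rgt0 _ (ltr0Sn _ 1)) info_red_qform (bigD1 s0) //= ltr_wpDr //.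
  by apply: sumr_ge0 => s _; apply: sumr_ge0.
rewrite (bigD1 ord_max) //= ltr_wpDr ?sumr_ge0 //.
rewrite /pad_row red_idx_widen red_idx_max subr0 mulr_gt0 ?oppr_gt0 ?linked //.
by rewrite lt_def sqr_ge0 andbT sqrf_eq0.
Qed.

End ReducedInformation.

Section Optimality.
Variables (R : realType) (n k : nat) (pi : 'I_n.+1 -> R).
Hypotheses (pi_gt0 : forall i, 0 < pi i) (k_ge2 : (2 <= k)%N) (k_le : (k <= n.+1)%N).
Local Notation CS := (choice_set n.+1 k).
Local Notation design := (CS -> R).

Lemma linked_to_last (i : 'I_n) :
  exists C : CS, widen_ord (leq_pred n.+1) i \in val C /\ ord_max \in val C.
Proof.
by apply: exists_choice_set; rewrite ?k_ge2 ?k_le // -val_eqE /= neq_ltn ltn_ord.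
Qed.

Definition uniform_design : design := fun=> #|{: CS}|%:R^-1.

Lemma uniform_design_gt0 C : 0 < uniform_design C.
Proof. by rewrite invr_gt0 ltr0n; apply/card_gt0P; exists C. Qed.

Lemma uniform_design_simplex : in_simplex uniform_design.
Proof.
have n_gt0 : (0 < n)%N by rewrite -ltnS (leq_trans k_ge2).
have [C _] := linked_to_last (Ordinal n_gt0).
split=> [C'|]; first exact: ltW (uniform_design_gt0 _).
rewrite sumr_const (_ : #|xpredT| = #|{: CS}|) // -[X in X = 1]mulr_natr mulVf //.
by rewrite pnatr_eq0 -lt0n; apply/card_gt0P; exists C.
Qed.

Lemma uniform_design_pd : pdmx (info_red pi uniform_design).
Proof.
have u_ge0 C : 0 <= uniform_design C := ltW (uniform_design_gt0 C).
apply: info_red_pd => // i; have [C [iC lastC]] := linked_to_last i.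
by apply: (info_off_lt0 pi_gt0 u_ge0 (uniform_design_gt0 C)).
Qed.

Lemma optimal_det_gt0 (xi : design) :
  locally_D_optimal pi xi -> 0 < \det (info_red pi xi).
Proof.
case=> _ /(_ _ uniform_design_simplex).
rewrite /logdet_red (pdmx_det_gt0 uniform_design_pd).
by case: ifP => // _; rewrite leeNy_eq.
Qed.

Lemma sum_RSLGamma_design (xi : design) : info_red pi xi \in unitmx ->
  \sum_C xi C = 1 -> \sum_C (RSLGamma pi xi C - n%:R) * xi C = 0.
Proof.
move=> uA xi_sum; have := tr_Sigma_info_red pi xi xi.
rewrite /Sigma_red mulVmx // mxtrace1 => tr_n.
under eq_bigr do rewrite mulrBl mulrC.
by rewrite sumrB -tr_n -mulr_sumr xi_sum mulr1 subrr.
Qed.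

Lemma optimal_RSLGamma_le (xi : design) :
  locally_D_optimal pi xi -> forall C, RSLGamma pi xi C <= n%:R.
Proof.
move=> optxi C; have [[xi_ge0 xi_sum] opt] := optxi.
have det_gt0 := optimal_det_gt0 optxi; set A := info_red pi xi in det_gt0.
have uA : A \in unitmx by rewrite unitmxE unitfE gt_eqF.
rewrite leNgt; apply/negP => RSL_gt.
set Z := invmx A *m info_red pi (point_design C) - 1%:M.
have trZ : 0 < \tr Z by rewrite /Z raddfB /= mxtrace1 -RSLGamma_point subr_gt0.
have [t [/andP[t_gt0 t_le1] det_gt1]] := det_perturb_gt1 trZ.
pose w C' := (1 - t) * xi C' + t * point_design C C'.
have w_simplex : in_simplex w.
  split=> [C'|]; first by rewrite addr_ge0 ?mulr_ge0 ?subr_ge0 ?xi_ge0 ?ler0n ?(ltW t_gt0).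
  rewrite big_split /= -!mulr_sumr xi_sum (bigD1 C) //= big1 => [|C' /negbTE CC'].
    by rewrite /point_design eqxx addr0 mulr1 mulr1 subrK.
  by rewrite /point_design CC'.
have Mw : info_red pi w = A *m (1%:M + t *: Z).
  rewrite info_red_comb mulmxDr mulmx1 -scalemxAr /Z mulmxBr mulmxA mulmxV //.
  by rewrite mul1mx mulmx1 scalerBr scalerBl scale1r [RHS]addrA addrAC.
have := opt _ w_simplex; rewrite logdet_red_le // Mw det_mulmx.
by rewrite -[X in _ <= X]mulr1 ler_pM2l // leNgt det_gt1.
Qed.

Lemma RSLGamma_le_optimal (xi : design) : in_simplex xi -> info_red pi xi \in unitmx ->
  (forall C, RSLGamma pi xi C <= n%:R) -> locally_D_optimal pi xi.
Proof.
move=> xi_simplex uA RSL_le; split=> // w w_simplex.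
have pd_info (v : design) : in_simplex v -> info_red pi v \in unitmx -> pdmx (info_red pi v).
  by case=> v_ge0 _; exact: psdmx_unit_pd (info_red_psd pi_gt0 v_ge0).
have det_gt0 := pdmx_det_gt0 (pd_info _ xi_simplex uA).
rewrite logdet_red_le //; have [detw_gt0|detw_le0] := ltP 0 (\det (info_red pi w)); last first.
  exact: le_trans detw_le0 (ltW det_gt0).
have uw : info_red pi w \in unitmx by rewrite unitmxE unitfE gt_eqF.
apply: pdmx_det_le (pd_info _ xi_simplex uA) (pd_info _ w_simplex uw) _.
have := tr_Sigma_info_red pi xi w; rewrite /Sigma_red => ->.
apply: le_trans (_ : \sum_C w C * n%:R <= _); last by rewrite -mulr_suml (proj2 w_simplex) mul1r.
by apply: ler_sum => C _; rewrite ler_wpM2l ?(proj1 w_simplex).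
Qed.

Lemma locally_D_optimalP (xi : design) :
  locally_D_optimal pi xi <->
  [/\ in_simplex xi, info_red pi xi \in unitmx,
      forall C, RSLGamma pi xi C <= n%:R &
      \sum_C (RSLGamma pi xi C - n%:R) * xi C = 0].
Proof.
split=> [optxi | [xi_simplex uA RSL_le _]]; last exact: RSLGamma_le_optimal.
have uA : info_red pi xi \in unitmx by rewrite unitmxE unitfE gt_eqF ?optimal_det_gt0.
split=> //; first exact: (proj1 optxi); first exact: optimal_RSLGamma_le.
exact: sum_RSLGamma_design uA (proj2 (proj1 optxi)).
Qed.

End Optimality.

Theorem theorem3p4 (R : realType) (m k : nat) (pi : 'I_m -> R)
  (hm : (2 <= m)%N) (hk2 : (2 <= k)%N) (hkm : (k <= m)%N)
  (hpi : forall i, 0 < pi i) (xi : choice_set m k -> R) :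
  locally_D_optimal pi xi <->
  [/\ in_simplex xi,
      info_red pi xi \in unitmx,
      (forall C, RSLGamma pi xi C <= (m.-1)%:R) &
      \sum_C (RSLGamma pi xi C - (m.-1)%:R) * xi C = 0].
Proof.
case: m pi hm hkm xi hpi => [//|n] pi _ hkm xi hpi.
exact: locally_D_optimalP hpi hk2 hkm xi.
Qed.
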